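(* Let $E:[0,\infty)\times\mathbb{R}^2\to\mathbb{R}^2$ and $b:[0,\infty)\times\mathbb{R}^2\to\mathbb{R}$ be continuous, with $b(t,x)\neq 0$ for all $(t,x)$, and set $B(t,x)=b(t,x)\,e_3$. Fix $\Delta t>0$, $T>0$, set $t^n=n\Delta t$ and $N_T=\lfloor T/\Delta t\rfloor$. For each $\varepsilon>0$ let $(x^n_\varepsilon,v^n_\varepsilon)_{0\le n\le N_T}\subset\mathbb{R}^2\times\mathbb{R}^2$ satisfy, for $0\le n\le N_T-1$, the first-order semi-implicit scheme $$\frac{x^{n+1}_\varepsilon-x^n_\varepsilon}{\Delta t}=\frac{v^{n+1}_\varepsilon}{\varepsilon},\qquad \frac{v^{n+1}_\varepsilon-v^n_\varepsilon}{\Delta t}=\frac1\varepsilon\Big(\frac{v^{n+1}_\varepsilon}{\varepsilon}\wedge B(t^n,x^n_\varepsilon)+E(t^n,x^n_\varepsilon)\Big).$$ Assume that for every $1\le n\le N_T$ the family $(x^n_\varepsilon,\varepsilon v^n_\varepsilon)_{\varepsilon>0}$ is bounded uniformly in $\varepsilon$, and that $(x^0_\varepsilon,\varepsilon v^0_\varepsilon)\to(y^0,0)$ as $\varepsilon\to0$. Then for every $0\le n\le N_T$, $x^n_\varepsilon\to y^n$ as $\varepsilon\to0$, where $(y^n)$ is defined by the given $y^0$ and $$\frac{y^{n+1}-y^n}{\Delta t}=U(t^n,y^n),\qquad 0\le n\le N_T-1.$$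
   Context: Vectors of $\mathbb{R}^2$ are identified with vectors $(w_1,w_2,0)$ of $\mathbb{R}^3$, $e_3=(0,0,1)$, and $\wedge$ is the cross product; thus for $w\in\mathbb{R}^2$ and $B=b\,e_3$, $w\wedge B=b\,(w_2,-w_1)\in\mathbb{R}^2$. The guiding-center drift is $U(t,x)=\dfrac{E(t,x)\wedge B(t,x)}{\|B(t,x)\|^2}$. *)

From Stdlib Require Import Reals Lra ZArith.
Open Scope R_scope.

Definition vec2 := (R * R)%type.
Definition vadd (u w : vec2) : vec2 := (fst u + fst w, snd u + snd w).
Definition vsub (u w : vec2) : vec2 := (fst u - fst w, snd u - snd w).
Definition vscal (c : R) (w : vec2) : vec2 := (c * fst w, c * snd w).
Definition vnorm (w : vec2) : R := sqrt (fst w ^ 2 + snd w ^ 2).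
Definition vdist (u w : vec2) : R := vnorm (vsub u w).

(* w /\ (b e3) = b (w2, -w1) *)
Definition wedgeB (w : vec2) (b : R) : vec2 := (b * snd w, - (b * fst w)).

(* guiding-center drift U = (E /\ B) / ||B||^2 with B = b e3, ||B||^2 = b^2 *)
Definition driftU (E : R -> vec2 -> vec2) (b : R -> vec2 -> R) (t : R) (x : vec2) : vec2 :=
  vscal (/ (b t x ^ 2)) (wedgeB (E t x) (b t x)).

Definition cont_vec (F : R -> vec2 -> vec2) : Prop :=
  forall t x, 0 <= t -> forall eta, 0 < eta -> exists delta, 0 < delta /\
    forall s y, 0 <= s -> Rabs (s - t) < delta -> vdist y x < delta ->
      vdist (F s y) (F t x) < eta.
Definition cont_scal (F : R -> vec2 -> R) : Prop :=
  forall t x, 0 <= t -> forall eta, 0 < eta -> exists delta, 0 < delta /\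
    forall s y, 0 <= s -> Rabs (s - t) < delta -> vdist y x < delta ->
      Rabs (F s y - F t x) < eta.

Definition lim_eps0 (f : R -> vec2) (l : vec2) : Prop :=
  forall eta, 0 < eta -> exists delta, 0 < delta /\
    forall eps, 0 < eps < delta -> vdist (f eps) l < eta.

Definition NT (T dt : R) : nat := Z.to_nat (Int_part (T / dt)).

Fixpoint yseq (E : R -> vec2 -> vec2) (b : R -> vec2 -> R) (dt : R) (y0 : vec2) (n : nat) : vec2 :=
  match n with
  | O => y0
  | S m => vadd (yseq E b dt y0 m) (vscal dt (driftU E b (INR m * dt) (yseq E b dt y0 m)))
  end.

From Stdlib Require Import Reals Lra Lia.
From Coquelicot Require Import Coquelicot.
Open Scope R_scope.

(* Induction on n with the invariant "x^n_eps -> y^n and eps v^n_eps -> 0".  The position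
   equation gives eps v^{n+1} = (eps^2/dt) (x^{n+1} - x^n), which vanishes since x^{n+1} stays
   bounded.  Crossing the velocity equation with B solves it for v^{n+1}/eps in terms of
   eps (v^{n+1} - v^n)/dt - E(t^n, x^n); as eps -> 0 this residual tends to -E(t^n, y^n), so by
   continuity of E, b and b(t^n, y^n) <> 0 the increment (x^{n+1} - x^n)/dt = v^{n+1}/eps
   tends to U(t^n, y^n). *)

Section RealLimits.
Context {T : Type} {F : (T -> Prop) -> Prop} {FF : Filter F}.

Lemma filterlim_Rplus {f g : T -> R} {a b : R} :
  filterlim f F (locally a) -> filterlim g F (locally b) ->
  filterlim (fun t => f t + g t) F (locally (a + b)).
Proof.
  intros Hf Hg; exact (filterlim_comp_2 f g _ Hf Hg (@filterlim_plus _ R_NormedModule a b)).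
Qed.

Lemma filterlim_Rmult {f g : T -> R} {a b : R} :
  filterlim f F (locally a) -> filterlim g F (locally b) ->
  filterlim (fun t => f t * g t) F (locally (a * b)).
Proof.
  intros Hf Hg; exact (filterlim_comp_2 f g _ Hf Hg (@filterlim_mult R_AbsRing a b)).
Qed.

Lemma filterlim_Ropp {f : T -> R} {a : R} :
  filterlim f F (locally a) -> filterlim (fun t => - f t) F (locally (- a)).
Proof.
  intros Hf; eapply filterlim_comp; [exact Hf | exact (@filterlim_opp _ R_NormedModule a)].
Qed.

Lemma filterlim_Rminus {f g : T -> R} {a b : R} :
  filterlim f F (locally a) -> filterlim g F (locally b) ->
  filterlim (fun t => f t - g t) F (locally (a - b)).
Proof. intros Hf Hg; exact (filterlim_Rplus Hf (filterlim_Ropp Hg)). Qed.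

Lemma filterlim_Rinv {f : T -> R} {a : R} :
  a <> 0 -> filterlim f F (locally a) -> filterlim (fun t => / f t) F (locally (/ a)).
Proof.
  intros Ha Hf; eapply filterlim_comp; [exact Hf | apply (filterlim_Rbar_inv (Finite a))].
  now intros [= ].
Qed.

Lemma filterlim_Rmult_bounded {f g : T -> R} (M : R) :
  filterlim f F (locally 0) -> F (fun t => Rabs (g t) <= M) ->
  filterlim (fun t => f t * g t) F (locally 0).
Proof.
  intros Hf Hg; apply filterlim_locally; intros eps.
  assert (HK : 0 < Rabs M + 1) by (pose proof (Rabs_pos M); lra).
  assert (Hf' := proj1 (filterlim_locally f 0) Hf
                  (mkposreal _ (Rdiv_lt_0_compat _ _ (cond_pos eps) HK))).
  refine (filter_imp _ _ _ (filter_and _ _ Hf' Hg)); intros t [Hft Hgt].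
  change (Rabs (f t - 0) < eps / (Rabs M + 1)) in Hft; change (Rabs (f t * g t - 0) < eps).
  rewrite Rminus_0_r in *; rewrite Rabs_mult.
  assert (Hgt' : Rabs (g t) <= Rabs M + 1) by (pose proof (Rle_abs M); lra).
  apply Rle_lt_trans with (Rabs (f t) * (Rabs M + 1)).
  - apply Rmult_le_compat_l; [apply Rabs_pos | exact Hgt'].
  - apply Rmult_lt_reg_r with (/ (Rabs M + 1)); [now apply Rinv_0_lt_compat|].
    now rewrite Rmult_assoc, Rinv_r, Rmult_1_r by lra.
Qed.

End RealLimits.

Lemma filterlim_at_right_0 (f : R -> R) (l : R) :
  filterlim f (at_right 0) (locally l) <->
  forall eta, 0 < eta -> exists delta, 0 < delta /\
    forall e, 0 < e < delta -> Rabs (f e - l) < eta.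
Proof.
  rewrite filterlim_locally; split.
  - intros H eta heta.
    destruct (H (mkposreal eta heta)) as [[d hd] Hd].
    exists d; split; [exact hd|]; intros e [he0 hed].
    apply (Hd e); [|exact he0].
    change (Rabs (e - 0) < d); rewrite Rminus_0_r, Rabs_right; lra.
  - intros H [eta heta].
    destruct (H eta heta) as [d [hd Hd]].
    exists (mkposreal d hd); intros e He he0.
    change (Rabs (e - 0) < d) in He; rewrite Rminus_0_r, Rabs_right in He by lra.
    exact (Hd e (conj he0 He)).
Qed.

Lemma filterlim_at_right_0_id : filterlim (fun e => e) (at_right 0) (locally 0).
Proof.
  apply filterlim_at_right_0; intros eta heta; exists eta; split; [exact heta|].
  intros e he; rewrite Rminus_0_r, Rabs_right; lra.
Qed.

Lemma Rabs_fst_le_vnorm (w : vec2) : Rabs (fst w) <= vnorm w.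
Proof.
  unfold vnorm; rewrite <- sqrt_Rsqr_abs; apply sqrt_le_1_alt.
  unfold Rsqr; simpl; nra.
Qed.

Lemma Rabs_snd_le_vnorm (w : vec2) : Rabs (snd w) <= vnorm w.
Proof.
  unfold vnorm; rewrite <- sqrt_Rsqr_abs; apply sqrt_le_1_alt.
  unfold Rsqr; simpl; nra.
Qed.

Lemma vnorm_le_Rabs_fst_snd (w : vec2) : vnorm w <= Rabs (fst w) + Rabs (snd w).
Proof.
  pose proof (Rabs_pos (fst w)); pose proof (Rabs_pos (snd w)).
  unfold vnorm; rewrite <- (sqrt_Rsqr (Rabs (fst w) + Rabs (snd w))) by lra.
  apply sqrt_le_1_alt; unfold Rsqr.
  rewrite <- (pow2_abs (fst w)), <- (pow2_abs (snd w)); nra.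
Qed.

Lemma lim_eps0_components (f : R -> vec2) (l : vec2) :
  lim_eps0 f l <->
  filterlim (fun e => fst (f e)) (at_right 0) (locally (fst l)) /\
  filterlim (fun e => snd (f e)) (at_right 0) (locally (snd l)).
Proof.
  rewrite !filterlim_at_right_0; unfold lim_eps0, vdist; split.
  - intros H; split; intros eta heta; destruct (H eta heta) as [d [hd Hd]];
      exists d; (split; [exact hd|]); intros e he;
      eapply Rle_lt_trans; try exact (Hd e he).
    + exact (Rabs_fst_le_vnorm (vsub (f e) l)).
    + exact (Rabs_snd_le_vnorm (vsub (f e) l)).
  - intros [H1 H2] eta heta.
    destruct (H1 (eta / 2)) as [d1 [hd1 Hd1]]; [lra|].
    destruct (H2 (eta / 2)) as [d2 [hd2 Hd2]]; [lra|].
    exists (Rmin d1 d2); split; [now apply Rmin_pos|]; intros e [he0 hed].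
    pose proof (Rmin_l d1 d2); pose proof (Rmin_r d1 d2).
    specialize (Hd1 e ltac:(lra)); specialize (Hd2 e ltac:(lra)).
    eapply Rle_lt_trans; [apply vnorm_le_Rabs_fst_snd|]; simpl; lra.
Qed.

Lemma lim_eps0_ext (f g : R -> vec2) (l l' : vec2) :
  lim_eps0 f l -> (forall e, 0 < e -> f e = g e) -> l = l' -> lim_eps0 g l'.
Proof.
  intros H Hfg <- eta heta; destruct (H eta heta) as [d [hd Hd]].
  exists d; split; [exact hd|]; intros e he; rewrite <- Hfg by lra; auto.
Qed.

Lemma lim_eps0_vadd {f g : R -> vec2} {l m : vec2} :
  lim_eps0 f l -> lim_eps0 g m -> lim_eps0 (fun e => vadd (f e) (g e)) (vadd l m).
Proof.
  rewrite !lim_eps0_components; intros [Hf1 Hf2] [Hg1 Hg2].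
  split; [exact (filterlim_Rplus Hf1 Hg1) | exact (filterlim_Rplus Hf2 Hg2)].
Qed.

Lemma lim_eps0_vsub {f g : R -> vec2} {l m : vec2} :
  lim_eps0 f l -> lim_eps0 g m -> lim_eps0 (fun e => vsub (f e) (g e)) (vsub l m).
Proof.
  rewrite !lim_eps0_components; intros [Hf1 Hf2] [Hg1 Hg2].
  split; [exact (filterlim_Rminus Hf1 Hg1) | exact (filterlim_Rminus Hf2 Hg2)].
Qed.

Lemma lim_eps0_vscal {c : R -> R} {f : R -> vec2} {k : R} {l : vec2} :
  filterlim c (at_right 0) (locally k) -> lim_eps0 f l ->
  lim_eps0 (fun e => vscal (c e) (f e)) (vscal k l).
Proof.
  rewrite !lim_eps0_components; intros Hc [Hf1 Hf2].
  split; [exact (filterlim_Rmult Hc Hf1) | exact (filterlim_Rmult Hc Hf2)].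
Qed.

Lemma lim_eps0_wedgeB {f : R -> vec2} {c : R -> R} {l : vec2} {k : R} :
  lim_eps0 f l -> filterlim c (at_right 0) (locally k) ->
  lim_eps0 (fun e => wedgeB (f e) (c e)) (wedgeB l k).
Proof.
  rewrite !lim_eps0_components; intros [Hf1 Hf2] Hc.
  split; [exact (filterlim_Rmult Hc Hf2) | exact (filterlim_Ropp (filterlim_Rmult Hc Hf1))].
Qed.

Lemma lim_eps0_vscal_bounded {c : R -> R} {f : R -> vec2} (M : R) :
  filterlim c (at_right 0) (locally 0) -> (forall e, 0 < e -> vnorm (f e) <= M) ->
  lim_eps0 (fun e => vscal (c e) (f e)) (0, 0).
Proof.
  intros Hc Hf; apply lim_eps0_components; simpl.
  split; apply (filterlim_Rmult_bounded M Hc); exists (mkposreal 1 Rlt_0_1);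
    intros e _ he; eapply Rle_trans; try apply (Hf e he).
  - apply Rabs_fst_le_vnorm.
  - apply Rabs_snd_le_vnorm.
Qed.

Lemma lim_eps0_cont_vec (G : R -> vec2 -> vec2) (t : R) (f : R -> vec2) (l : vec2) :
  cont_vec G -> 0 <= t -> lim_eps0 f l -> lim_eps0 (fun e => G t (f e)) (G t l).
Proof.
  intros hG ht Hf eta heta; destruct (hG t l ht eta heta) as [d [hd Hd]].
  destruct (Hf d hd) as [d' [hd' Hd']]; exists d'; split; [exact hd'|].
  intros e he; apply Hd; auto; rewrite Rminus_eq_0, Rabs_R0; exact hd.
Qed.

Lemma filterlim_cont_scal (G : R -> vec2 -> R) (t : R) (f : R -> vec2) (l : vec2) :
  cont_scal G -> 0 <= t -> lim_eps0 f l ->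
  filterlim (fun e => G t (f e)) (at_right 0) (locally (G t l)).
Proof.
  intros hG ht Hf; apply filterlim_at_right_0; intros eta heta.
  destruct (hG t l ht eta heta) as [d [hd Hd]].
  destruct (Hf d hd) as [d' [hd' Hd']]; exists d'; split; [exact hd'|].
  intros e he; apply Hd; auto; rewrite Rminus_eq_0, Rabs_R0; exact hd.
Qed.

Lemma scheme_scaled_velocity (dt e : R) (x0 x1 v1 : vec2) :
  0 < dt -> 0 < e ->
  vscal (/ dt) (vsub x1 x0) = vscal (/ e) v1 ->
  vscal e v1 = vsub (vscal (e * e / dt) x1) (vscal (e * e / dt) x0).
Proof.
  destruct x0 as [a0 b0], x1 as [a1 b1], v1 as [p1 q1]; unfold vscal, vsub; simpl.
  intros hdt he [= H1 H2].
  assert (Hp1 : p1 = e * (/ dt * (a1 - a0))) by (rewrite H1; field; lra).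
  assert (Hq1 : q1 = e * (/ dt * (b1 - b0))) by (rewrite H2; field; lra).
  rewrite Hp1, Hq1; f_equal; field; lra.
Qed.

(* [(w /\ B) /\ B = - b^2 w] inverts the cross product with [B = b e3]. *)
Lemma scheme_position_update (dt e beta : R) (E0 x0 x1 v0 v1 : vec2) :
  0 < dt -> 0 < e -> beta <> 0 ->
  vscal (/ dt) (vsub x1 x0) = vscal (/ e) v1 ->
  vscal (/ dt) (vsub v1 v0) = vscal (/ e) (vadd (wedgeB (vscal (/ e) v1) beta) E0) ->
  x1 = vadd x0 (vscal dt (vscal (- / beta ^ 2)
         (wedgeB (vsub (vscal (/ dt) (vsub (vscal e v1) (vscal e v0))) E0) beta))).
Proof.
  destruct x0 as [a0 b0], x1 as [a1 b1], v0 as [p0 q0], v1 as [p1 q1], E0 as [E1 E2].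
  unfold vscal, vsub, vadd, wedgeB; simpl.
  intros hdt he hbeta [= Hx1 Hx2] [= Hv1 Hv2].
  assert (Ha1 : a1 = a0 + dt * (/ e * p1)) by (rewrite <- Hx1; field; lra).
  assert (Hb1 : b1 = b0 + dt * (/ e * q1)) by (rewrite <- Hx2; field; lra).
  assert (Kp : / dt * (e * p1 - e * p0) - E1 = beta * (/ e * q1)).
  { replace (/ dt * (e * p1 - e * p0)) with (e * (/ dt * (p1 - p0))) by ring.
    rewrite Hv1; field; lra. }
  assert (Kq : / dt * (e * q1 - e * q0) - E2 = - (beta * (/ e * p1))).
  { replace (/ dt * (e * q1 - e * q0)) with (e * (/ dt * (q1 - q0))) by ring.
    rewrite Hv2; field; lra. }
  rewrite Kp, Kq, Ha1, Hb1; f_equal; (field; split; [lra | exact hbeta]).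
Qed.

Lemma scaled_velocity_vanishes (dt M : R) (xn xn1 vn1 : R -> vec2) (y : vec2) :
  0 < dt ->
  (forall e, 0 < e -> vscal (/ dt) (vsub (xn1 e) (xn e)) = vscal (/ e) (vn1 e)) ->
  (forall e, 0 < e -> vnorm (xn1 e) <= M) ->
  lim_eps0 xn y ->
  lim_eps0 (fun e => vscal e (vn1 e)) (0, 0).
Proof.
  intros hdt Hx HM Hxn.
  assert (Hc : filterlim (fun e => e * e / dt) (at_right 0) (locally 0)).
  { pose proof (filterlim_Rmult (filterlim_Rmult filterlim_at_right_0_id filterlim_at_right_0_id)
                  (filterlim_const (/ dt))) as H.
    now rewrite !Rmult_0_l in H. }
  eapply lim_eps0_ext.
  - exact (lim_eps0_vsub (lim_eps0_vscal_bounded M Hc HM) (lim_eps0_vscal Hc Hxn)).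
  - intros e he; symmetry; exact (scheme_scaled_velocity dt e _ _ _ hdt he (Hx e he)).
  - unfold vsub, vscal; simpl; f_equal; ring.
Qed.

Lemma position_step_limit (E : R -> vec2 -> vec2) (b : R -> vec2 -> R)
  (hE : cont_vec E) (hb : cont_scal b) (hb0 : forall t x, 0 <= t -> b t x <> 0)
  (dt t : R) (xn xn1 vn vn1 : R -> vec2) (y : vec2) :
  0 < dt -> 0 <= t ->
  (forall e, 0 < e -> vscal (/ dt) (vsub (xn1 e) (xn e)) = vscal (/ e) (vn1 e)) ->
  (forall e, 0 < e -> vscal (/ dt) (vsub (vn1 e) (vn e)) =
     vscal (/ e) (vadd (wedgeB (vscal (/ e) (vn1 e)) (b t (xn e))) (E t (xn e)))) ->
  lim_eps0 xn y ->
  lim_eps0 (fun e => vscal e (vn e)) (0, 0) ->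
  lim_eps0 (fun e => vscal e (vn1 e)) (0, 0) ->
  lim_eps0 xn1 (vadd y (vscal dt (driftU E b t y))).
Proof.
  intros hdt ht Hx Hv Hxn Hvn Hvn1.
  pose proof (filterlim_cont_scal b t xn y hb ht Hxn) as Hb.
  assert (Hcoef : filterlim (fun e => - / b t (xn e) ^ 2) (at_right 0)
                    (locally (- / b t y ^ 2))).
  { apply filterlim_Ropp, filterlim_Rinv; [now apply pow_nonzero, hb0|].
    exact (filterlim_Rmult Hb (filterlim_Rmult Hb (filterlim_const 1))). }
  pose proof (lim_eps0_vsub (lim_eps0_vscal (filterlim_const (/ dt)) (lim_eps0_vsub Hvn1 Hvn))
                (lim_eps0_cont_vec E t xn y hE ht Hxn)) as Hcross.
  pose proof (lim_eps0_vadd Hxn (lim_eps0_vscal (filterlim_const dt)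
                (lim_eps0_vscal Hcoef (lim_eps0_wedgeB Hcross Hb)))) as Hlim.
  apply (lim_eps0_ext _ _ _ _ Hlim).
  - intros e he; symmetry; apply scheme_position_update; auto.
  - assert (hby : b t y <> 0) by (apply hb0, ht).
    unfold driftU, vadd, vscal, vsub, wedgeB; simpl; f_equal; (field; split; [exact hby | lra]).
Qed.

Theorem proposition3p1
  (E : R -> vec2 -> vec2) (b : R -> vec2 -> R)
  (hE : cont_vec E) (hb : cont_scal b)
  (hb0 : forall t x, 0 <= t -> b t x <> 0)
  (dt T : R) (hdt : 0 < dt) (hT : 0 < T)
  (x v : R -> nat -> vec2)
  (hx : forall eps n, 0 < eps -> (n < NT T dt)%nat ->
     vscal (/ dt) (vsub (x eps (S n)) (x eps n)) = vscal (/ eps) (v eps (S n)))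
  (hv : forall eps n, 0 < eps -> (n < NT T dt)%nat ->
     vscal (/ dt) (vsub (v eps (S n)) (v eps n)) =
     vscal (/ eps) (vadd (wedgeB (vscal (/ eps) (v eps (S n))) (b (INR n * dt) (x eps n)))
                         (E (INR n * dt) (x eps n))))
  (hbd : forall n, (1 <= n <= NT T dt)%nat -> exists M, forall eps, 0 < eps ->
     vnorm (x eps n) <= M /\ vnorm (vscal eps (v eps n)) <= M)
  (y0 : vec2)
  (hx0 : lim_eps0 (fun eps => x eps O) y0)
  (hv0 : lim_eps0 (fun eps => vscal eps (v eps O)) (0, 0)) :
  forall n, (n <= NT T dt)%nat -> lim_eps0 (fun eps => x eps n) (yseq E b dt y0 n).
Proof.
  assert (Hind : forall n, (n <= NT T dt)%nat ->
    lim_eps0 (fun e => x e n) (yseq E b dt y0 n) /\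
    lim_eps0 (fun e => vscal e (v e n)) (0, 0)).
  { induction n as [|n IH]; intros Hn; [split; assumption|].
    destruct (IH ltac:(lia)) as [Hxn Hvn].
    assert (Hlt : (n < NT T dt)%nat) by lia.
    destruct (hbd (S n) ltac:(lia)) as [M HM].
    assert (ht : 0 <= INR n * dt) by (apply Rmult_le_pos; [apply pos_INR | lra]).
    assert (Hvn1 : lim_eps0 (fun e => vscal e (v e (S n))) (0, 0)).
    { exact (scaled_velocity_vanishes dt M _ _ _ _ hdt
               (fun e he => hx e n he Hlt) (fun e he => proj1 (HM e he)) Hxn). }
    split; [|exact Hvn1].
    exact (position_step_limit E b hE hb hb0 dt _ _ _ _ _ _ hdt ht
             (fun e he => hx e n he Hlt) (fun e he => hv e n he Hlt) Hxn Hvn Hvn1). }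
  intros n Hn; exact (proj1 (Hind n Hn)).
Qed.
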